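(* Let $p\ge 1$ and $r_p(x)=\sum_{j=0}^{p}\frac{(-\mathrm{i}x)^j}{j!}$ for real $x$. Then there exists $\eta_s>0$ such that $|r_p(x)|<1$ for all $0<x<\pi\eta_s$ if and only if $p=4m$ or $p=4m-1$ for some positive integer $m$. Moreover, if $p\not\equiv 0,3 \pmod 4$, then $|r_p(x)|>1$ for all sufficiently small $x>0$. *)

From Stdlib Require Import Arith Reals Lra Lia.
Open Scope R_scope.

Record Cplx := mkC { Re : R; Im : R }.

Definition Cadd (z w : Cplx) : Cplx := mkC (Re z + Re w) (Im z + Im w).
Definition Cmul (z w : Cplx) : Cplx :=
  mkC (Re z * Re w - Im z * Im w) (Re z * Im w + Im z * Re w).
Definition Czero : Cplx := mkC 0 0.
Definition Cone : Cplx := mkC 1 0.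
Fixpoint Cpow (z : Cplx) (n : nat) : Cplx :=
  match n with O => Cone | S k => Cmul z (Cpow z k) end.
Definition Cscale (a : R) (z : Cplx) : Cplx := mkC (a * Re z) (a * Im z).
Definition Cnorm (z : Cplx) : R := sqrt (Re z * Re z + Im z * Im z).

Fixpoint Csum (f : nat -> Cplx) (n : nat) : Cplx :=
  match n with O => f O | S k => Cadd (Csum f k) (f (S k)) end.

Definition r_poly (p : nat) (x : R) : Cplx :=
  Csum (fun j => Cscale (/ INR (fact j)) (Cpow (mkC 0 (- x)) j)) p.

(** Write [r_p = a_p + i b_p].  With [p = k + 1], the derivative of [a_p] is
    [b_k] and that of [b_p] is [-a_k], so
    [(a_p^2 + b_p^2)' = 2 x^p / p! * (Re((-i)^k) a_k + Im((-i)^k) b_k)].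
    Near [0] we have [a_k ~ 1] and [b_k ~ -x], so the sign of this derivative,
    hence of [|r_p|^2 - 1] by the mean value theorem, only depends on [k mod 4]:
    it is negative exactly when [p mod 4] is [0] or [3]. *)

From Stdlib Require Import Arith Reals Lra Lia.
Open Scope R_scope.

Definition re_negi (j : nat) : R := Re (Cpow (mkC 0 (-1)) j).
Definition im_negi (j : nat) : R := Im (Cpow (mkC 0 (-1)) j).

Lemma re_negi_S j : re_negi (S j) = im_negi j.
Proof. unfold re_negi, im_negi; simpl; ring. Qed.

Lemma im_negi_S j : im_negi (S j) = - re_negi j.
Proof. unfold re_negi, im_negi; simpl; ring. Qed.

Lemma negi_pow_unit j : re_negi j ^ 2 + im_negi j ^ 2 = 1.
Proof.
  induction j as [|j IH]; [unfold re_negi, im_negi; simpl; ring|].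
  rewrite re_negi_S, im_negi_S; lra.
Qed.

Lemma negi_pow_bounded j : (-1 <= re_negi j <= 1) /\ (-1 <= im_negi j <= 1).
Proof. pose proof (negi_pow_unit j); split; split; nra. Qed.

Lemma negi_pow_period q r :
  re_negi (4 * q + r) = re_negi r /\ im_negi (4 * q + r) = im_negi r.
Proof.
  induction q as [|q [IHre IHim]]; [split; reflexivity|].
  replace (4 * S q + r)%nat with (S (S (S (S (4 * q + r))))) by lia.
  repeat rewrite ?re_negi_S, ?im_negi_S.
  rewrite IHre, IHim.
  split; ring.
Qed.

Lemma negi_pow_mod4 k :
  re_negi k = re_negi (k mod 4) /\ im_negi k = im_negi (k mod 4).
Proof. rewrite (Nat.div_mod_eq k 4) at 1 3; apply negi_pow_period. Qed.

Lemma Cpow_scaled_negi x j :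
  Re (Cpow (mkC 0 (- x)) j) = re_negi j * x ^ j /\
  Im (Cpow (mkC 0 (- x)) j) = im_negi j * x ^ j.
Proof.
  induction j as [|j [IHre IHim]]; [unfold re_negi, im_negi; simpl; split; ring|].
  rewrite re_negi_S, im_negi_S; simpl; rewrite IHre, IHim; split; ring.
Qed.

Definition taylor_sum (c : nat -> R) (n : nat) (x : R) : R :=
  sum_f_R0 (fun j => c j / INR (fact j) * x ^ j) n.

Lemma derivable_pt_lim_taylor_term c j x :
  derivable_pt_lim (fun y => c (S j) / INR (fact (S j)) * y ^ S j) x
    (c (S j) / INR (fact j) * x ^ j).
Proof.
  replace (c (S j) / INR (fact j) * x ^ j)
    with (c (S j) / INR (fact (S j)) * (INR (S j) * x ^ Nat.pred (S j))).
  - apply (derivable_pt_lim_scal (fun y => y ^ S j)), derivable_pt_lim_pow.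
  - cbn [Nat.pred fact]; rewrite mult_INR.
    field; split; [apply INR_fact_neq_0 | apply not_0_INR; lia].
Qed.

Lemma derivable_pt_lim_taylor_sum c n x :
  derivable_pt_lim (taylor_sum c (S n)) x (taylor_sum (fun j => c (S j)) n x).
Proof.
  induction n as [|n IH].
  - replace (taylor_sum (fun j => c (S j)) 0 x)
      with (0 + c 1%nat / INR (fact 0) * x ^ 0) by (unfold taylor_sum; simpl; ring).
    exact (derivable_pt_lim_plus _ _ x _ _
             (derivable_pt_lim_const (c 0%nat / INR (fact 0) * 1) x)
             (derivable_pt_lim_taylor_term c 0 x)).
  - exact (derivable_pt_lim_plus _ _ x _ _ IH (derivable_pt_lim_taylor_term c (S n) x)).
Qed.

Lemma Rabs_le_inv a b : Rabs a <= b -> - b <= a <= b.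
Proof. pose proof (Rle_abs a); pose proof (Rle_abs (- a)); rewrite Rabs_Ropp in *; lra. Qed.

Lemma taylor_term_le_sqr c n x : -1 <= c <= 1 -> 0 <= x <= 1 ->
  Rabs (c / INR (fact (S (S n))) * x ^ S (S n)) <= x ^ 2.
Proof.
  intros Hc Hx.
  assert (Hfact : 1 <= INR (fact (S (S n)))) by (apply (le_INR 1), lt_O_fact).
  assert (Hinv : 0 < / INR (fact (S (S n))) <= 1).
  { split; [apply Rinv_0_lt_compat; lra|].
    rewrite <- Rinv_1; apply Rinv_le_contravar; lra. }
  assert (Hpow : 0 <= x ^ n <= 1).
  { split; [apply pow_le; lra|]. rewrite <- (pow1 n); apply pow_incr; lra. }
  replace (c / INR (fact (S (S n))) * x ^ S (S n))
    with (c * / INR (fact (S (S n))) * x ^ n * x ^ 2) by (unfold Rdiv; simpl; ring).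
  assert (-1 <= c * / INR (fact (S (S n))) <= 1) by (split; nra).
  assert (-1 <= c * / INR (fact (S (S n))) * x ^ n <= 1) by (split; nra).
  assert (0 <= x ^ 2) by (apply pow_le; lra).
  apply Rabs_le; split; nra.
Qed.

Lemma taylor_sum_linear_approx c n x :
  (forall j, -1 <= c j <= 1) -> 0 <= x <= 1 ->
  Rabs (taylor_sum c (S n) x - (c 0%nat + c 1%nat * x)) <= INR n * x ^ 2.
Proof.
  intros Hc Hx; induction n as [|n IH].
  - unfold taylor_sum; simpl.
    replace (c 0%nat / 1 * 1 + c 1%nat / 1 * (x * 1) - (c 0%nat + c 1%nat * x))
      with 0 by field.
    rewrite Rabs_R0; lra.
  - change (taylor_sum c (S (S n)) x) with
      (taylor_sum c (S n) x + c (S (S n)) / INR (fact (S (S n))) * x ^ S (S n)).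
    pose proof (taylor_term_le_sqr (c (S (S n))) n x (Hc _) Hx).
    rewrite S_INR.
    replace (taylor_sum c (S n) x + c (S (S n)) / INR (fact (S (S n))) * x ^ S (S n)
             - (c 0%nat + c 1%nat * x))
      with ((taylor_sum c (S n) x - (c 0%nat + c 1%nat * x))
            + c (S (S n)) / INR (fact (S (S n))) * x ^ S (S n)) by ring.
    eapply Rle_trans; [apply Rabs_triang|]; lra.
Qed.

Lemma taylor_sum_at_0 c n : taylor_sum c n 0 = c 0%nat.
Proof.
  induction n as [|n IH]; unfold taylor_sum in *; simpl; [field|].
  rewrite IH; ring.
Qed.

Lemma taylor_sum_opp c n x :
  taylor_sum (fun j => - c j) n x = - taylor_sum c n x.
Proof.
  unfold taylor_sum; induction n as [|n IH]; cbn [sum_f_R0]; [|rewrite IH];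
    unfold Rdiv; ring.
Qed.

Definition re_rpoly (p : nat) : R -> R := taylor_sum re_negi p.
Definition im_rpoly (p : nat) : R -> R := taylor_sum im_negi p.

Lemma r_poly_re_im p x :
  Re (r_poly p x) = re_rpoly p x /\ Im (r_poly p x) = im_rpoly p x.
Proof.
  unfold r_poly, re_rpoly, im_rpoly, taylor_sum.
  induction p as [|p [IHre IHim]]; cbn [Csum Cadd Cscale Re Im sum_f_R0].
  - destruct (Cpow_scaled_negi x 0) as [-> ->]; split; unfold Rdiv; ring.
  - rewrite IHre, IHim; destruct (Cpow_scaled_negi x (S p)) as [-> ->].
    split; unfold Rdiv; ring.
Qed.

Definition modsq (p : nat) (x : R) : R :=
  re_rpoly p x * re_rpoly p x + im_rpoly p x * im_rpoly p x.

Lemma Cnorm_r_poly p x : Cnorm (r_poly p x) = sqrt (modsq p x).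
Proof. unfold Cnorm, modsq; destruct (r_poly_re_im p x) as [-> ->]; reflexivity. Qed.

Lemma derivable_pt_lim_re_rpoly k x :
  derivable_pt_lim (re_rpoly (S k)) x (im_rpoly k x).
Proof.
  replace (im_rpoly k x) with (taylor_sum (fun j => re_negi (S j)) k x).
  - apply derivable_pt_lim_taylor_sum.
  - apply sum_eq; intros j _; rewrite re_negi_S; reflexivity.
Qed.

Lemma derivable_pt_lim_im_rpoly k x :
  derivable_pt_lim (im_rpoly (S k)) x (- re_rpoly k x).
Proof.
  replace (- re_rpoly k x) with (taylor_sum (fun j => im_negi (S j)) k x).
  - apply derivable_pt_lim_taylor_sum.
  - unfold re_rpoly; rewrite <- taylor_sum_opp.
    apply sum_eq; intros j _; rewrite im_negi_S; reflexivity.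
Qed.

(** [phase k x = Re (conj ((-i)^k) * r_k(x))]. *)
Definition phase (k : nat) (x : R) : R :=
  re_negi k * re_rpoly k x + im_negi k * im_rpoly k x.

Lemma derivable_pt_lim_modsq k x :
  derivable_pt_lim (modsq (S k)) x (2 * (x ^ S k / INR (fact (S k))) * phase k x).
Proof.
  pose proof (derivable_pt_lim_re_rpoly k x) as Hre.
  pose proof (derivable_pt_lim_im_rpoly k x) as Him.
  replace (2 * (x ^ S k / INR (fact (S k))) * phase k x)
    with (im_rpoly k x * re_rpoly (S k) x + re_rpoly (S k) x * im_rpoly k x
          + (- re_rpoly k x * im_rpoly (S k) x + im_rpoly (S k) x * - re_rpoly k x)).
  - exact (derivable_pt_lim_plus _ _ x _ _
             (derivable_pt_lim_mult _ _ x _ _ Hre Hre)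
             (derivable_pt_lim_mult _ _ x _ _ Him Him)).
  - change (re_rpoly (S k) x)
      with (re_rpoly k x + re_negi (S k) / INR (fact (S k)) * x ^ S k).
    change (im_rpoly (S k) x)
      with (im_rpoly k x + im_negi (S k) / INR (fact (S k)) * x ^ S k).
    rewrite re_negi_S, im_negi_S; unfold phase; unfold Rdiv; ring.
Qed.

Lemma modsq_mvt k x : 0 < x ->
  exists c, 0 < c < x /\
    modsq (S k) x - 1 = 2 * (c ^ S k / INR (fact (S k))) * phase k c * x.
Proof.
  intros Hx.
  destruct (MVT_cor2 (modsq (S k)) (fun c => 2 * (c ^ S k / INR (fact (S k))) * phase k c)
              0 x Hx (fun c _ => derivable_pt_lim_modsq k c)) as [c [Hmvt Hc]].
  exists c; split; [exact Hc|].
  unfold modsq at 2 in Hmvt; unfold re_rpoly, im_rpoly in Hmvt.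
  rewrite !taylor_sum_at_0 in Hmvt.
  change (re_negi 0) with 1 in Hmvt; change (im_negi 0) with 0 in Hmvt.
  lra.
Qed.

Lemma re_rpoly_pos k x : 0 < x -> INR k * x < 1 -> 0 < re_rpoly k x.
Proof.
  intros Hx Hkx; destruct k as [|n].
  { change (re_rpoly 0 x) with (re_negi 0 / 1 * 1); change (re_negi 0) with 1; lra. }
  rewrite S_INR in Hkx.
  assert (0 <= INR n) by apply pos_INR.
  pose proof (taylor_sum_linear_approx re_negi n x
                (fun j => proj1 (negi_pow_bounded j)) ltac:(nra)) as Happrox.
  change (re_negi 0) with 1 in Happrox; rewrite re_negi_S in Happrox.
  change (im_negi 0) with 0 in Happrox.
  apply Rabs_le_inv in Happrox; unfold re_rpoly; simpl in Happrox |- *; nra.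
Qed.

Lemma im_rpoly_neg k x : (1 <= k)%nat -> 0 < x -> INR k * x < 1 -> im_rpoly k x < 0.
Proof.
  intros Hk Hx Hkx; destruct k as [|n]; [lia|].
  rewrite S_INR in Hkx.
  assert (0 <= INR n) by apply pos_INR.
  pose proof (taylor_sum_linear_approx im_negi n x
                (fun j => proj2 (negi_pow_bounded j)) ltac:(nra)) as Happrox.
  change (im_negi 0) with 0 in Happrox; rewrite im_negi_S in Happrox.
  change (re_negi 0) with 1 in Happrox.
  apply Rabs_le_inv in Happrox; unfold im_rpoly; simpl in Happrox |- *; nra.
Qed.

Lemma mod4_succ k : (S k mod 4 = (k mod 4 + 1) mod 4)%nat.
Proof. rewrite <- Nat.add_1_r; symmetry; apply Nat.Div0.add_mod_idemp_l. Qed.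

Lemma phase_mod4 k x :
  phase k x = match k mod 4 with
              | 0 => re_rpoly k x
              | 1 => - im_rpoly k x
              | 2 => - re_rpoly k x
              | _ => im_rpoly k x
              end%nat.
Proof.
  pose proof (Nat.mod_upper_bound k 4 ltac:(lia)) as Hlt.
  destruct (negi_pow_mod4 k) as [Hre Him]; unfold phase; rewrite Hre, Him.
  destruct (k mod 4) as [|[|[|[|r]]]]; [| | | |lia];
    repeat rewrite ?re_negi_S, ?im_negi_S; change (re_negi 0) with 1;
    change (im_negi 0) with 0; ring.
Qed.

Lemma phase_pos k x : (S k mod 4 = 1 \/ S k mod 4 = 2)%nat ->
  0 < x -> INR (S k) * x < 1 -> 0 < phase k x.
Proof.
  intros Hp Hx Hkx.
  assert (Hk : INR k * x < 1) by (rewrite S_INR in Hkx; lra).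
  pose proof (Nat.mod_upper_bound k 4 ltac:(lia)) as Hlt.
  rewrite phase_mod4; rewrite mod4_succ in Hp.
  destruct (k mod 4) as [|[|[|[|r]]]] eqn:Hmod; simpl in Hp; try lia.
  - exact (re_rpoly_pos k x Hx Hk).
  - assert (1 <= k)%nat by (destruct k; [discriminate|lia]).
    pose proof (im_rpoly_neg k x ltac:(assumption) Hx Hk); lra.
Qed.

Lemma phase_neg k x : (S k mod 4 = 0 \/ S k mod 4 = 3)%nat ->
  0 < x -> INR (S k) * x < 1 -> phase k x < 0.
Proof.
  intros Hp Hx Hkx.
  assert (Hk : INR k * x < 1) by (rewrite S_INR in Hkx; lra).
  pose proof (Nat.mod_upper_bound k 4 ltac:(lia)) as Hlt.
  rewrite phase_mod4; rewrite mod4_succ in Hp.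
  destruct (k mod 4) as [|[|[|[|r]]]] eqn:Hmod; simpl in Hp; try lia.
  - pose proof (re_rpoly_pos k x Hx Hk); lra.
  - assert (1 <= k)%nat by (destruct k; [discriminate|lia]).
    exact (im_rpoly_neg k x ltac:(assumption) Hx Hk).
Qed.

Lemma modsq_lt_1 p x : (1 <= p)%nat -> (p mod 4 = 0 \/ p mod 4 = 3)%nat ->
  0 < x -> INR p * x < 1 -> modsq p x < 1.
Proof.
  intros Hp Hmod Hx Hpx; destruct p as [|k]; [lia|].
  destruct (modsq_mvt k x Hx) as [c [Hc Hmvt]].
  assert (Hphase : phase k c < 0) by (apply phase_neg; [assumption|lra|nra]).
  assert (0 < c ^ S k / INR (fact (S k)))
    by (apply Rdiv_lt_0_compat; [apply pow_lt; lra|apply INR_fact_lt_0]).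
  assert (0 < 2 * (c ^ S k / INR (fact (S k))) * x) by nra.
  nra.
Qed.

Lemma modsq_gt_1 p x : (p mod 4 = 1 \/ p mod 4 = 2)%nat ->
  0 < x -> INR p * x < 1 -> 1 < modsq p x.
Proof.
  intros Hmod Hx Hpx; destruct p as [|k]; [simpl in Hmod; lia|].
  destruct (modsq_mvt k x Hx) as [c [Hc Hmvt]].
  assert (Hphase : 0 < phase k c) by (apply phase_pos; [assumption|lra|nra]).
  assert (0 < c ^ S k / INR (fact (S k)))
    by (apply Rdiv_lt_0_compat; [apply pow_lt; lra|apply INR_fact_lt_0]).
  assert (0 < 2 * (c ^ S k / INR (fact (S k))) * x) by nra.
  nra.
Qed.

Lemma modsq_nonneg p x : 0 <= modsq p x.
Proof. unfold modsq; nra. Qed.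

Lemma Cnorm_r_poly_lt_1 p x : (1 <= p)%nat -> (p mod 4 = 0 \/ p mod 4 = 3)%nat ->
  0 < x < / INR p -> Cnorm (r_poly p x) < 1.
Proof.
  intros Hp Hmod Hx.
  assert (Hpos : 0 < INR p) by (apply lt_0_INR; lia).
  rewrite Cnorm_r_poly, <- sqrt_1; apply sqrt_lt_1_alt.
  split; [apply modsq_nonneg|apply modsq_lt_1; try tauto].
  rewrite <- (Rinv_r (INR p)) by lra; apply Rmult_lt_compat_l; tauto.
Qed.

Lemma Cnorm_r_poly_gt_1 p x : (1 <= p)%nat -> (p mod 4 = 1 \/ p mod 4 = 2)%nat ->
  0 < x < / INR p -> 1 < Cnorm (r_poly p x).
Proof.
  intros Hp Hmod Hx.
  assert (Hpos : 0 < INR p) by (apply lt_0_INR; lia).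
  rewrite Cnorm_r_poly, <- sqrt_1; apply sqrt_lt_1_alt.
  split; [lra|apply modsq_gt_1; try tauto].
  rewrite <- (Rinv_r (INR p)) by lra; apply Rmult_lt_compat_l; tauto.
Qed.

Lemma mod4_0_or_3_iff p : (1 <= p)%nat ->
  (exists m : nat, (1 <= m)%nat /\ (p = (4 * m)%nat \/ p = (4 * m - 1)%nat))
  <-> (p mod 4 = 0 \/ p mod 4 = 3)%nat.
Proof.
  intros Hp.
  pose proof (Nat.div_mod_eq p 4); pose proof (Nat.mod_upper_bound p 4 ltac:(lia)).
  split.
  - intros [m [Hm Hpm]]; lia.
  - intros [Hmod | Hmod]; [exists (p / 4)%nat | exists (p / 4 + 1)%nat]; lia.
Qed.

Theorem mainTheorem3 (p : nat) (hp : (1 <= p)%nat) :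
  ((exists eta_s : R, 0 < eta_s /\
      forall x : R, 0 < x < PI * eta_s -> Cnorm (r_poly p x) < 1)
   <-> (exists m : nat, (1 <= m)%nat /\ (p = (4 * m)%nat \/ p = (4 * m - 1)%nat)))
  /\
  ((p mod 4 <> 0)%nat /\ (p mod 4 <> 3)%nat ->
     exists delta : R, 0 < delta /\
       forall x : R, 0 < x < delta -> Cnorm (r_poly p x) > 1).
Proof.
  assert (Hp : 0 < INR p) by (apply lt_0_INR; lia).
  assert (Hpos : 0 < / INR p) by (apply Rinv_0_lt_compat; lra).
  pose proof PI_RGT_0 as Hpi.
  pose proof (Nat.mod_upper_bound p 4 ltac:(lia)) as Hlt.
  rewrite mod4_0_or_3_iff by exact hp.
  split; [split|].
  - intros [eta [Heta Hsmall]].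
    destruct (Nat.eq_dec (p mod 4) 0), (Nat.eq_dec (p mod 4) 3); try tauto.
    set (x := Rmin (/ INR p) (PI * eta) / 2).
    assert (Hmin : 0 < Rmin (/ INR p) (PI * eta)) by (apply Rmin_glb_lt; nra).
    pose proof (Rmin_l (/ INR p) (PI * eta)); pose proof (Rmin_r (/ INR p) (PI * eta)).
    assert (Hlt1 := Hsmall x ltac:(unfold x; lra)).
    assert (Hgt1 := Cnorm_r_poly_gt_1 p x hp ltac:(lia) ltac:(unfold x; lra)).
    lra.
  - intros Hmod; exists (/ INR p / PI); split; [apply Rdiv_lt_0_compat; lra|].
    intros x Hx; apply Cnorm_r_poly_lt_1; [exact hp|exact Hmod|].
    replace (PI * (/ INR p / PI)) with (/ INR p) in Hx by (field; lra); exact Hx.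
  - intros Hmod; exists (/ INR p); split; [exact Hpos|].
    intros x Hx; apply Cnorm_r_poly_gt_1; [exact hp|lia|exact Hx].
Qed.
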